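(* Let $\mathcal P_n$ be the set of pairs $(\lambda,\mu)$ of partitions $\lambda=(\lambda_1\ge\dots\ge\lambda_s>0)$, $\mu=(\mu_1\ge\dots\ge\mu_r>0)$ with $|\lambda|+|\mu|=n$ and $r$ even (these parametrize conjugacy classes of the Weyl group of $so_{2n}$). Define $\Phi(\lambda,\mu)$ to be the partition of $2n$ with parts $\lambda_1,\lambda_1,\lambda_2,\lambda_2,\dots,\lambda_s,\lambda_s$, $2\mu_1+1,\dots,2\mu_{r/2}+1$, $2\mu_{r/2+1}-1,\dots,2\mu_r-1$. Then $\Phi$ maps $\mathcal P_n$ onto the set of partitions of $2n$ in which every even part occurs with even multiplicity, and the restriction of $\Phi$ to the pairs with $\lambda=\emptyset$ is injective. *)

From mathcomp Require Import all_boot.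
Set Implicit Arguments. Unset Strict Implicit. Unset Printing Implicit Defensive.

Definition is_partition (s : seq nat) : bool :=
  sorted geq s && all (fun x => 0 < x) s.

Definition inP (n : nat) (lam mu : seq nat) : Prop :=
  [/\ is_partition lam, is_partition mu, sumn lam + sumn mu = n
    & ~~ odd (size mu)].

Definition Phi (lam mu : seq nat) : seq nat :=
  let h := (size mu)./2 in
  sort geq (flatten [seq [:: x; x] | x <- lam]
            ++ [seq (2 * x).+1 | x <- take h mu]
            ++ [seq (2 * x).-1 | x <- drop h mu]).

Definition evenmult_partition (m : nat) (p : seq nat) : Prop :=
  [/\ is_partition p, sumn p = m
    & forall k, ~~ odd k -> ~~ odd (count_mem k p)].

From mathcomp Require Import all_boot.
From mathcomp Require Import zify.
Set Implicit Arguments. Unset Strict Implicit. Unset Printing Implicit Defensive.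

(* Every part of Phi(lambda, mu) coming from mu is odd, so the even parts are
   the doubled parts of lambda; and |Phi(lambda, mu)| = 2|lambda| + 2|mu|
   because the r/2 added ones cancel the r/2 removed ones.  Conversely, given
   a partition p of 2n whose even parts have even multiplicity, let lambda
   carry each part of p with half its multiplicity and let D be the set of
   parts of odd multiplicity.  These are odd, and there is an even number of
   them since |D| = |p| - 2|lambda| is even.  Writing D as d_1 > ... > d_2k,
   put mu_i = (d_i - 1)/2 for i <= k and mu_i = (d_i + 1)/2 for i > k; this is
   a partition because distinct odd numbers differ by at least 2, and
   Phi(lambda, mu) = p.  Finally, when lambda is empty the sequence
   2mu_1+1, ..., 2mu_k+1, 2mu_{k+1}-1, ..., 2mu_2k-1 is already nonincreasing,
   so it is Phi(empty, mu) itself, from which mu is read back. *)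

Lemma geq_trans : transitive geq. Proof. exact: rev_trans leq_trans. Qed.
Lemma geq_total : total geq. Proof. by move=> x y; apply: leq_total. Qed.
Lemma geq_anti : antisymmetric geq.
Proof. by move=> x y /andP[yx xy]; apply/anti_leq/andP. Qed.

Lemma sorted_map_take_drop (T U : Type) (r : rel T) (r' : rel U)
    (f g : T -> U) h s :
  transitive r -> transitive r' ->
  {homo f : x y / r x y >-> r' x y} -> {homo g : x y / r x y >-> r' x y} ->
  (forall x y, r x y -> r' (f x) (g y)) ->
  sorted r s -> sorted r' (map f (take h s) ++ map g (drop h s)).
Proof.
move=> r_tr r'_tr f_homo g_homo fg_homo.
rewrite (sorted_pairwise r_tr) (sorted_pairwise r'_tr) -{1}(cat_take_drop h s).
rewrite !pairwise_cat allrel_mapl allrel_mapr !pairwise_map.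
case/and3P=> [cross s_take s_drop]; apply/and3P; split.
- exact: sub_allrel cross.
- exact: sub_pairwise s_take.
- exact: sub_pairwise s_drop.
Qed.

Lemma count_mem_even_all_odd s k :
  all odd s -> ~~ odd k -> count_mem k s = 0.
Proof.
move=> + k_even; elim: s => //= x s IHs /andP[x_odd /IHs ->].
by case: eqP => // x_k; rewrite -x_k x_odd in k_even.
Qed.

Lemma odd_sumn_all_odd s : all odd s -> odd (sumn s) = odd (size s).
Proof. by elim: s => //= x s IHs /andP[x_odd /IHs]; rewrite oddD x_odd => ->. Qed.

Definition double_parts (T : Type) (s : seq T) : seq T :=
  flatten [seq [:: x; x] | x <- s].

Lemma count_double_parts (T : Type) (a : pred T) s :
  count a (double_parts s) = (count a s).*2.
Proof. by elim: s => //= x s IHs; rewrite IHs; case: (a x); lia. Qed.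

Lemma mem_double_parts (T : eqType) (s : seq T) x :
  (x \in double_parts s) = (x \in s).
Proof. by rewrite -!has_pred1 !has_count count_double_parts double_gt0. Qed.

Lemma sumn_double_parts s : sumn (double_parts s) = (sumn s).*2.
Proof. by elim: s => //= x s IHs; rewrite IHs; lia. Qed.

Definition odd_parts (mu : seq nat) : seq nat :=
  let h := (size mu)./2 in
  [seq (2 * x).+1 | x <- take h mu] ++ [seq (2 * x).-1 | x <- drop h mu].

Lemma PhiE lam mu : Phi lam mu = sort geq (double_parts lam ++ odd_parts mu).
Proof. by []. Qed.

Lemma size_odd_parts mu : size (odd_parts mu) = size mu.
Proof. by rewrite size_cat !size_map -size_cat cat_take_drop. Qed.

Lemma odd_parts_inj : injective odd_parts.
Proof.
move=> mu1 mu2 eq_mu; have eq_size : size mu1 = size mu2.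
  by rewrite -size_odd_parts eq_mu size_odd_parts.
have inj_succ : injective (fun x => (2 * x).+1) by move=> x y /=; lia.
have inj_pred : injective (fun x => (2 * x).-1) by move=> x y /=; lia.
move: eq_mu; rewrite /odd_parts eq_size => eq_cat.
have eq_take := f_equal (take (size mu2)./2) eq_cat.
have eq_drop := f_equal (drop (size mu2)./2) eq_cat.
have half_le : (size mu2)./2 <= size mu1 by rewrite eq_size; lia.
rewrite !take_size_cat ?size_map ?size_takel // in eq_take; last by lia.
rewrite !drop_size_cat ?size_map ?size_takel // in eq_drop; last by lia.
set h := (size mu2)./2 in eq_take eq_drop *.
rewrite -(cat_take_drop h mu1) -(cat_take_drop h mu2).
by rewrite (inj_map inj_succ eq_take) (inj_map inj_pred eq_drop).
Qed.

Lemma sorted_odd_parts mu : sorted geq mu -> sorted geq (odd_parts mu).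
Proof. by apply: sorted_map_take_drop geq_trans geq_trans _ _ _ => x y /=; lia. Qed.

Lemma Phi_nil mu : sorted geq mu -> Phi [::] mu = odd_parts mu.
Proof.
by move=> mu_sorted; rewrite PhiE sorted_sort ?sorted_odd_parts //; exact: geq_trans.
Qed.

Lemma all_odd_odd_parts mu : all (fun x => 0 < x) mu -> all odd (odd_parts mu).
Proof.
move=> mu_pos; rewrite all_cat !all_map; apply/andP; split; apply/allP => x.
- by move=> _ /=; lia.
- by move=> /mem_drop/(allP mu_pos) /=; lia.
Qed.

Lemma sumn_odd_parts mu : all (fun x => 0 < x) mu -> ~~ odd (size mu) ->
  sumn (odd_parts mu) = (sumn mu).*2.
Proof.
move=> mu_pos even_size; set h := (size mu)./2.
have sumn_succ s : sumn [seq (2 * x).+1 | x <- s] = (sumn s).*2 + size s.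
  by elim: s => //= x s ->; lia.
have sumn_pred s : all (fun x => 0 < x) s ->
    sumn [seq (2 * x).-1 | x <- s] + size s = (sumn s).*2.
  by elim: s => //= x s IHs /andP[x_pos /IHs]; lia.
have drop_pos : all (fun x => 0 < x) (drop h mu).
  by apply/allP => x /mem_drop/(allP mu_pos).
have := sumn_pred _ drop_pos; have := f_equal sumn (cat_take_drop h mu).
rewrite /odd_parts /= -/h !sumn_cat sumn_succ size_takel ?size_drop /h; lia.
Qed.

Lemma sumn_Phi lam mu : all (fun x => 0 < x) mu -> ~~ odd (size mu) ->
  sumn (Phi lam mu) = (sumn lam + sumn mu).*2.
Proof.
move=> mu_pos even_size; rewrite PhiE (perm_sumn (permEl (perm_sort _ _))).
by rewrite sumn_cat sumn_double_parts sumn_odd_parts // doubleD.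
Qed.

Lemma Phi_evenmult n lam mu :
  inP n lam mu -> evenmult_partition (2 * n) (Phi lam mu).
Proof.
case=> /andP[_ lam_pos] /andP[_ mu_pos] sum_n even_size.
have mu_odd := all_odd_odd_parts mu_pos.
have count_Phi a :
    count a (Phi lam mu) = count a (double_parts lam ++ odd_parts mu).
  by rewrite PhiE; apply/permP/permEl/perm_sort.
split.
- rewrite /is_partition sort_sorted; last exact: geq_total.
  apply/allP => x; rewrite PhiE mem_sort mem_cat mem_double_parts.
  by case/orP=> [/(allP lam_pos) | /(allP mu_odd)] //; case: x.
- by rewrite sumn_Phi // sum_n -mul2n.
- move=> k k_even; rewrite count_Phi count_cat count_double_parts.
  by rewrite (count_mem_even_all_odd mu_odd) // addn0 odd_double.
Qed.

Definition odd_parts_inv (D : seq nat) : seq nat :=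
  let h := (size D)./2 in
  [seq x./2 | x <- take h D] ++ [seq x.+1./2 | x <- drop h D].

Lemma size_odd_parts_inv D : size (odd_parts_inv D) = size D.
Proof. by rewrite size_cat !size_map -size_cat cat_take_drop. Qed.

Lemma odd_parts_invK D : all odd D -> odd_parts (odd_parts_inv D) = D.
Proof.
move=> D_odd; rewrite /odd_parts size_odd_parts_inv /odd_parts_inv /=.
have size_take : size [seq x./2 | x <- take (size D)./2 D] = (size D)./2.
  by rewrite size_map size_takel //; lia.
rewrite take_size_cat // drop_size_cat // -!map_comp.
rewrite !map_id_in ?cat_take_drop // => x /= x_in.
- by have := allP D_odd x (mem_drop x_in); lia.
- by have := allP D_odd x (mem_take x_in); lia.
Qed.

Lemma odd_parts_inv_partition D :
  sorted [rel x y | y.+1 < x] D -> all (fun x => 0 < x) D ->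
  is_partition (odd_parts_inv D).
Proof.
move=> D_sorted D_pos; have gap_trans : transitive [rel x y | y.+1 < x].
  by move=> y x z /=; lia.
apply/andP; split.
  by apply: sorted_map_take_drop gap_trans geq_trans _ _ _ D_sorted => x y /=; lia.
set h := (size D)./2; have size_le : size (take h D) <= size (drop h D).
  by rewrite size_takel ?size_drop /h; lia.
move: D_sorted; rewrite (sorted_pairwise gap_trans) -{1}(cat_take_drop h D).
rewrite pairwise_cat => /and3P[gap_take_drop _ _].
rewrite /odd_parts_inv -/h all_cat !all_map; apply/andP; split; apply/allP.
- move=> x x_take /=; case: (drop h D) size_le gap_take_drop => [|z zs].
    by case: (take h D) x_take.
  by move=> _ /allrelP/(_ x z x_take (mem_head _ _)) /=; lia.
- by move=> x /mem_drop/(allP D_pos) /=; lia.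
Qed.

Lemma count_mem_flatten_nseq (T : eqType) (f : T -> nat) (s : seq T) x :
  uniq s -> count_mem x (flatten [seq nseq (f y) y | y <- s]) = (x \in s) * f x.
Proof.
elim: s => //= y s IHs /andP[y_notin_s s_uniq].
rewrite count_cat IHs // count_nseq.
rewrite in_cons /=; case: (eqVneq y x) => [<-|_]; last by rewrite mul0n.
by rewrite (negbTE y_notin_s) addn0.
Qed.

Definition half_mult_parts (p : seq nat) : seq nat :=
  sort geq (flatten [seq nseq (count_mem x p)./2 x | x <- undup p]).

Definition odd_mult_parts (p : seq nat) : seq nat :=
  sort geq [seq x <- undup p | odd (count_mem x p)].

Lemma count_mem_half_mult_parts p x :
  count_mem x (half_mult_parts p) = (count_mem x p)./2.
Proof.
rewrite (permP (permEl (perm_sort _ _))).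
rewrite (count_mem_flatten_nseq (fun y => (count_mem y p)./2)) ?undup_uniq //.
rewrite mem_undup.
by case: (boolP (x \in p)) => [_|/count_memPn ->]; rewrite ?mul1n.
Qed.

Lemma count_mem_odd_mult_parts p x :
  count_mem x (odd_mult_parts p) = odd (count_mem x p).
Proof.
rewrite count_uniq_mem ?sort_uniq ?filter_uniq ?undup_uniq //.
rewrite mem_sort mem_filter mem_undup.
by case: (boolP (x \in p)) => [_|/count_memPn ->]; rewrite ?andbT ?andbF.
Qed.

Lemma perm_half_odd_mult_parts p :
  perm_eq (double_parts (half_mult_parts p) ++ odd_mult_parts p) p.
Proof.
apply/allP => x _ /=; rewrite count_cat count_double_parts.
rewrite count_mem_half_mult_parts count_mem_odd_mult_parts.
by rewrite addnC odd_double_half.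
Qed.

Lemma half_mult_parts_partition p :
  all (fun x => 0 < x) p -> is_partition (half_mult_parts p).
Proof.
move=> p_pos; rewrite /is_partition sort_sorted; last exact: geq_total.
apply/allP => x; rewrite -has_pred1 has_count count_mem_half_mult_parts => x_in.
by apply: (allP p_pos); rewrite -has_pred1 has_count; lia.
Qed.

Lemma odd_mult_parts_gap p :
  (forall k, ~~ odd k -> ~~ odd (count_mem k p)) ->
  all odd (odd_mult_parts p) /\ sorted [rel x y | y.+1 < x] (odd_mult_parts p).
Proof.
move=> even_mult; have D_odd : all odd (odd_mult_parts p).
  apply/allP => x; rewrite mem_sort mem_filter => /andP[odd_mult _].
  by apply: contraLR odd_mult; apply: even_mult.
split=> //; apply: (@sub_in_sorted _ _ gtn) D_odd _ => [x y /= ? ?|].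
  by lia.
rewrite gtn_sorted_uniq_geq sort_uniq filter_uniq ?undup_uniq //=.
exact: sort_sorted geq_total _.
Qed.

Lemma Phi_surj n p : evenmult_partition (2 * n) p ->
  exists lam mu, inP n lam mu /\ Phi lam mu = p.
Proof.
case=> /andP[p_sorted p_pos] sum_p even_mult.
set lam := half_mult_parts p; set D := odd_mult_parts p.
have p_perm : perm_eq (double_parts lam ++ D) p := perm_half_odd_mult_parts p.
have [D_odd D_gap] := odd_mult_parts_gap even_mult.
have D_pos : all (fun x => 0 < x) D by apply: sub_all D_odd; case.
have D_even : ~~ odd (size D).
  rewrite -odd_sumn_all_odd //; have := perm_sumn p_perm.
  by rewrite sumn_cat sumn_double_parts sum_p; lia.
have Phi_p : Phi lam (odd_parts_inv D) = p.
  rewrite PhiE odd_parts_invK // -[RHS](sorted_sort geq_trans p_sorted).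
  exact/(perm_sortP geq_total geq_trans geq_anti).
have /andP[mu_sorted mu_pos] := odd_parts_inv_partition D_gap D_pos.
have size_mu : ~~ odd (size (odd_parts_inv D)) by rewrite size_odd_parts_inv.
exists lam, (odd_parts_inv D); split=> //; split=> //.
- exact: half_mult_parts_partition.
- exact/andP.
- by have := sumn_Phi lam mu_pos size_mu; rewrite Phi_p sum_p /D; lia.
Qed.

Theorem mainTheorem7 (n : nat) :
  (forall lam mu, inP n lam mu -> evenmult_partition (2 * n) (Phi lam mu)) /\
  (forall p, evenmult_partition (2 * n) p ->
     exists lam mu, inP n lam mu /\ Phi lam mu = p) /\
  (forall mu1 mu2, inP n [::] mu1 -> inP n [::] mu2 ->
     Phi [::] mu1 = Phi [::] mu2 -> mu1 = mu2).
Proof.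
split; first exact: Phi_evenmult.
split; first exact: Phi_surj.
move=> mu1 mu2 [_ /andP[mu1_sorted _] _ _] [_ /andP[mu2_sorted _] _ _].
by rewrite !Phi_nil //; apply: odd_parts_inj.
Qed.
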